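(* Let $n\ge 3$, $0<m<\frac{n-2}{n}$, $m\ne\frac{n-2}{n+2}$, $\beta>0$, $\lambda>0$. Let $v$ be the radially symmetric solution described in the context, $w(s)=r^2v(r)^{1-m}$ with $s=\log r$, and $h(s)=w(s)-\frac{2(n-1)(n-2-nm)}{(1-m)\beta}s$. Then \[ \lim_{s\to\infty}\frac{h(s)}{\log s}=\lim_{s\to\infty}s\,h_s(s)=-\frac{(n-1)[n-2-(n+2)m]}{(1-m)\beta}. \]
   Context: $v=v(r)$, $r=|x|$, is the unique radially symmetric positive classical solution of $\frac{n-1}{m}\Delta v^m+\frac{2\beta}{1-m}v+\beta x\cdot\nabla v=0$ in $\mathbb{R}^n$ with $v(0)=\lambda$. *)

From Stdlib Require Export Reals.
From Coquelicot Require Export Coquelicot.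
Open Scope R_scope.

Definition vpow (v : R -> R) (m : R) : R -> R := fun r => Rpower (v r) m.

(* Radial form of  (n-1)/m Δ(v^m) + 2β/(1-m) v + β x·∇v = 0  at r > 0:
   Δ u = u'' + (n-1)/r u' for radial u, and x·∇v = r v'. *)
Definition radial_eq (n m beta : R) (v : R -> R) (r : R) : Prop :=
  (n - 1) / m * (Derive (Derive (vpow v m)) r + (n - 1) / r * Derive (vpow v m) r)
  + 2 * beta / (1 - m) * v r + beta * r * Derive v r = 0.

Definition is_radial_solution (n m beta lambda : R) (v : R -> R) : Prop :=
  (forall r, 0 <= r -> 0 < v r) /\
  v 0 = lambda /\
  filterlim v (at_right 0) (locally lambda) /\
  filterlim (Derive (vpow v m)) (at_right 0) (locally 0) /\
  (forall r, 0 < r -> ex_derive v r) /\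
  (forall r, 0 < r -> ex_derive (vpow v m) r) /\
  (forall r, 0 < r -> ex_derive (Derive (vpow v m)) r) /\
  (forall r, 0 < r -> radial_eq n m beta v r).

Definition wfun (m : R) (v : R -> R) : R -> R :=
  fun s => exp (2 * s) * Rpower (v (exp s)) (1 - m).

Definition hfun (n m beta : R) (v : R -> R) : R -> R :=
  fun s => wfun m v s - 2 * (n - 1) * (n - 2 - n * m) / ((1 - m) * beta) * s.

From Stdlib Require Import Reals Lra Psatz Classical.
From Coquelicot Require Import Coquelicot.
Open Scope R_scope.

(* In the variable [s = log r], [W := w] and [Q := w_s / w] solve the autonomous
   system [W' = W Q], [Q' = F0 + c1 Q - a Q^2 - b W Q] with [F0, a, b > 0]
   (the radial equation is a Riccati equation for [Q]), and [h_s = W Q - F0 / b].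
   [Q] stays nonnegative and bounded, so [W] is nondecreasing; a Lyapunov
   function shows [W -> +oo], after which the term [- b W Q] drives [Q -> 0] and
   [(Q + b W)' -> F0] gives [b W ~ F0 s].  Two comparison arguments for
   [z' = - K z + o(K)] with [K -> +oo] then give [s Q -> 1] and [s Q' -> 0];
   solving the [Q]-equation for [W Q] yields [s (W Q - F0 / b) -> c1 / b = L].
   Finally [h(s) / log s -> L] is l'Hopital's rule in the variable [log s]. *)

Local Notation at_top := (Rbar_locally p_infty).

Lemma at_top_of_ge (T : R) (P : R -> Prop) :
  (forall t, T <= t -> P t) -> at_top P.
Proof. intros HP; exists T; intros t Ht; apply HP; lra. Qed.

Lemma at_top_ge (T : R) : at_top (fun t => T <= t).
Proof. apply (at_top_of_ge T); auto. Qed.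

Lemma ge_of_at_top (P : R -> Prop) :
  at_top P -> exists T, forall t, T <= t -> P t.
Proof. intros [M HM]; exists (M + 1); intros t Ht; apply HM; lra. Qed.

Lemma is_lim_p_infty_intro (f : R -> R) (l : R) :
  (forall eps, 0 < eps -> at_top (fun t => Rabs (f t - l) <= eps)) ->
  is_lim f p_infty l.
Proof.
  intros H; apply filterlim_locally; intros eps.
  apply (filter_imp (fun t => Rabs (f t - l) <= eps / 2)).
  - intros t Ht; change (Rabs (f t - l) < eps); pose proof (cond_pos eps); lra.
  - apply H; pose proof (cond_pos eps); lra.
Qed.

Lemma is_lim_p_infty_elim (f : R -> R) (l : R) :
  is_lim f p_infty l ->
  forall eps, 0 < eps -> at_top (fun t => l - eps < f t < l + eps).
Proof.
  intros H eps Heps.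
  apply (filter_imp (fun t => Rabs (f t - l) < eps)).
  - intros t Ht; apply Rabs_def2 in Ht; lra.
  - exact (proj1 (filterlim_locally f l) H (mkposreal eps Heps)).
Qed.

Lemma is_lim_p_infty_p_infty_elim (f : R -> R) :
  is_lim f p_infty p_infty -> forall M, at_top (fun t => M <= f t).
Proof.
  intros H M; apply (H (fun y => M <= y)); exists M; intros; lra.
Qed.

Lemma is_lim_p_infty_p_infty_intro (f : R -> R) :
  (forall M, at_top (fun t => M <= f t)) -> is_lim f p_infty p_infty.
Proof.
  intros H P [M HM]; change (at_top (fun t => P (f t))).
  apply (filter_imp (fun t => M + 1 <= f t)); [| apply H].
  intros t Ht; apply HM; lra.
Qed.

Lemma is_lim_mult_R (f g : R -> R) (x : Rbar) (lf lg : R) :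
  is_lim f x lf -> is_lim g x lg -> is_lim (fun t => f t * g t) x (lf * lg).
Proof. intros Hf Hg; exact (is_lim_mult f g x lf lg Hf Hg I). Qed.

Lemma is_lim_inv_R (f : R -> R) (x : Rbar) (l : R) :
  l <> 0 -> is_lim f x l -> is_lim (fun t => / f t) x (/ l).
Proof.
  intros Hl Hf; apply (is_lim_inv f x l Hf).
  intros E; apply Hl; now injection E.
Qed.

Lemma is_lim_inv_p_infty (f : R -> R) :
  is_lim f p_infty p_infty -> is_lim (fun t => / f t) p_infty 0.
Proof. intros Hf; apply (is_lim_inv f p_infty p_infty Hf); discriminate. Qed.

Lemma is_lim_inv_id : is_lim (fun t => / t) p_infty 0.
Proof. apply is_lim_inv_p_infty, is_lim_id. Qed.

Lemma MVT_Derive (f : R -> R) (a b : R) :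
  (forall t, ex_derive f t) -> a < b ->
  exists c, a < c < b /\ f b - f a = Derive f c * (b - a).
Proof.
  intros Hf Hab.
  destruct (MVT_cor1 f a b (fun t => ex_derive_Reals_0 f t (Hf t)) Hab)
    as [c [-> Hc]].
  exists c; split; [exact Hc | now rewrite Derive_Reals].
Qed.

Lemma MVT_le (f : R -> R) (c a b : R) :
  (forall t, ex_derive f t) -> a <= b ->
  (forall t, a < t < b -> Derive f t <= c) -> f b - f a <= c * (b - a).
Proof.
  intros Hf Hab Hc; destruct (Req_dec a b) as [<- | Hne]; [lra |].
  destruct (MVT_Derive f a b Hf) as [t [Ht ->]]; [lra |].
  apply Rmult_le_compat_r; [lra | now apply Hc].
Qed.

Lemma MVT_ge (f : R -> R) (c a b : R) :
  (forall t, ex_derive f t) -> a <= b ->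
  (forall t, a < t < b -> c <= Derive f t) -> c * (b - a) <= f b - f a.
Proof.
  intros Hf Hab Hc; destruct (Req_dec a b) as [<- | Hne]; [lra |].
  destruct (MVT_Derive f a b Hf) as [t [Ht ->]]; [lra |].
  apply Rmult_le_compat_r; [lra | now apply Hc].
Qed.

Lemma ex_derive_near (f : R -> R) (x eps : R) :
  ex_derive f x -> 0 < eps ->
  exists delta, 0 < delta /\
    forall y, Rabs (y - x) < delta -> f x - eps < f y < f x + eps.
Proof.
  intros Hf Heps.
  destruct (proj1 (filterlim_locally f (f x)) (ex_derive_continuous f x Hf)
              (mkposreal eps Heps)) as [delta Hdelta].
  exists delta; split; [apply cond_pos |].
  intros y Hy; specialize (Hdelta y Hy).
  change (Rabs (f y - f x) < eps) in Hdelta; apply Rabs_def2 in Hdelta; lra.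
Qed.

(* Let [c] be the last time in [t0, t] at which [f <= K]; just after [c],
   [f] sits in the band [(K, K + d)] where it cannot increase. *)
Lemma barrier_le (f : R -> R) (t0 K d : R) :
  (forall t, ex_derive f t) -> 0 < d -> f t0 <= K ->
  (forall t, t0 <= t -> K < f t < K + d -> Derive f t <= 0) ->
  forall t, t0 <= t -> f t <= K.
Proof.
  intros Hf Hd H0 Hband t1 Ht1; apply Rnot_lt_le; intros Ht1K.
  set (E := fun t => t0 <= t <= t1 /\ f t <= K).
  destruct (completeness E) as [c [Hub Hlub]].
  { exists t1; intros t [Ht _]; lra. }
  { exists t0; split; [lra | exact H0]. }
  assert (Hc : t0 <= c <= t1).
  { split; [apply Hub; split; [lra | exact H0] | apply Hlub; intros t [Ht _]; lra]. }
  assert (Habove : forall t, c < t <= t1 -> K < f t).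
  { intros t Ht; apply Rnot_le_lt; intros HtK.
    assert (t <= c) by (apply Hub; split; [lra | exact HtK]); lra. }
  assert (HcK : f c <= K).
  { apply Rnot_lt_le; intros HcK.
    destruct (ex_derive_near f c (f c - K) (Hf c)) as [delta [Hdelta Hnear]]; [lra |].
    assert (c <= c - delta / 2); [| lra].
    apply Hlub; intros x [Hx HxK].
    assert (x <= c) by (apply Hub; split; assumption).
    apply Rnot_lt_le; intros Hxc.
    specialize (Hnear x ltac:(apply Rabs_def1; lra)); lra. }
  assert (Hct1 : c < t1) by (destruct (Req_dec c t1) as [-> |]; lra).
  destruct (ex_derive_near f c (K + d - f c) (Hf c)) as [delta [Hdelta Hnear]]; [lra |].
  set (t2 := Rmin (c + delta / 2) t1).
  assert (Ht2 : c < t2 <= t1 /\ t2 <= c + delta / 2)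
    by (unfold t2; apply Rmin_case_strong; intros; lra).
  assert (f t2 - f c <= 0 * (t2 - c)); [| specialize (Habove t2); lra].
  apply MVT_le; [exact Hf | lra |].
  intros t Ht; apply Hband; [lra |].
  split; [apply Habove; lra |].
  specialize (Hnear t ltac:(apply Rabs_def1; lra)); lra.
Qed.

(* [f] cannot stay positive, as it would decrease at rate [c]; once [f <= 0],
   the barrier keeps it there. *)
Lemma eventually_nonpos_of_Derive (f : R -> R) (c : R) :
  (forall t, ex_derive f t) -> 0 < c ->
  at_top (fun t => 0 < f t -> Derive f t <= - c) ->
  at_top (fun t => f t <= 0).
Proof.
  intros Hf Hc Hev; destruct (ge_of_at_top _ Hev) as [T HT].
  destruct (classic (exists t1, T <= t1 /\ f t1 <= 0)) as [[t1 [Ht1 Hf1]] | Hpos].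
  - apply (at_top_of_ge t1), (barrier_le f t1 0 1 Hf Rlt_0_1 Hf1).
    intros t Ht Hband; specialize (HT t ltac:(lra) ltac:(lra)); lra.
  - exfalso.
    assert (Hpos' : forall t, T <= t -> 0 < f t).
    { intros t Ht; apply Rnot_le_lt; intros Hft; apply Hpos; exists t; auto. }
    set (t2 := T + Rabs (f T) / c + 1).
    assert (Hdist : Rabs (f T) / c * c = Rabs (f T)) by (field; lra).
    assert (0 <= Rabs (f T) / c) by (apply Rdiv_le_0_compat; [apply Rabs_pos | lra]).
    assert (f t2 - f T <= - c * (t2 - T)).
    { apply MVT_le; [exact Hf | unfold t2; lra |].
      intros t Ht; apply HT, Hpos'; lra. }
    specialize (Hpos' t2 ltac:(unfold t2; lra)); pose proof (Rle_abs (f T)).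
    unfold t2 in *; nra.
Qed.

Lemma is_lim_div_id_of_Derive (f : R -> R) (l : R) :
  (forall t, ex_derive f t) -> is_lim (Derive f) p_infty l ->
  is_lim (fun t => f t / t) p_infty l.
Proof.
  intros Hf Hlim; apply is_lim_p_infty_intro; intros eps Heps.
  destruct (ge_of_at_top _ (is_lim_p_infty_elim _ _ Hlim (eps / 2) ltac:(lra)))
    as [T HT].
  set (T0 := Rmax T 1); set (B := Rabs (f T0 - l * T0)).
  assert (HT0 : T <= T0 /\ 1 <= T0) by (split; [apply Rmax_l | apply Rmax_r]).
  assert (HB : - B <= f T0 - l * T0 <= B) by now apply Rabs_le_between.
  assert (HBeps : 2 * B / eps * eps = 2 * B) by (field; lra).
  assert (0 <= 2 * B / eps)
    by (apply Rdiv_le_0_compat; [pose proof (Rabs_pos (f T0 - l * T0)); unfold B; lra | lra]).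
  apply (at_top_of_ge (T0 + 2 * B / eps)); intros t Ht.
  assert (f t - f T0 <= (l + eps / 2) * (t - T0)).
  { apply MVT_le; [exact Hf | lra | intros s Hs; specialize (HT s ltac:(lra)); lra]. }
  assert ((l - eps / 2) * (t - T0) <= f t - f T0).
  { apply MVT_ge; [exact Hf | lra | intros s Hs; specialize (HT s ltac:(lra)); lra]. }
  replace (f t / t - l) with ((f t - l * t) / t) by (field; lra).
  rewrite Rabs_div, (Rabs_right t) by lra.
  apply Rle_div_l; [lra |]; apply Rabs_le; split; nra.
Qed.

Lemma is_lim_div_ln_of_Derive (f : R -> R) (l : R) :
  (forall s, ex_derive f s) -> is_lim (fun s => s * Derive f s) p_infty l ->
  is_lim (fun s => f s / ln s) p_infty l.
Proof.
  intros Hf Hlim.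
  assert (Hexp : is_lim (fun t => f (exp t) / t) p_infty l).
  { apply (is_lim_div_id_of_Derive (fun t => f (exp t))); [intros t; auto_derive; apply Hf |].
    apply (is_lim_ext (fun t => exp t * Derive f (exp t))).
    - intros t; symmetry; apply is_derive_unique.
      auto_derive; [apply Hf | now rewrite Rmult_1_l].
    - apply (is_lim_comp _ _ _ _ _ Hlim is_lim_exp_p).
      exists 0; intros; discriminate. }
  apply (is_lim_ext_loc (fun s => f (exp (ln s)) / ln s)).
  - apply (at_top_of_ge 1); intros s Hs; now rewrite exp_ln by lra.
  - apply (is_lim_comp _ _ _ _ _ Hexp is_lim_ln_p).
    exists 0; intros; discriminate.
Qed.

Lemma is_lim_0_of_damped (z K : R -> R) :
  (forall t, ex_derive z t) -> is_lim K p_infty p_infty ->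
  is_lim (fun t => (Derive z t + K t * z t) / K t) p_infty 0 ->
  is_lim z p_infty 0.
Proof.
  intros Hz HK Hrel; apply is_lim_p_infty_intro; intros d Hd.
  assert (Hd2 : d * (2 / d) = 2) by (field; lra).
  assert (Hev : at_top (fun t => 2 / d <= K t /\
                  - (d / 2) < (Derive z t + K t * z t) / K t < d / 2)).
  { apply filter_and; [now apply is_lim_p_infty_p_infty_elim |].
    apply (filter_imp (fun t => 0 - d / 2 < (Derive z t + K t * z t) / K t < 0 + d / 2));
      [intros t Ht; lra | apply is_lim_p_infty_elim; [exact Hrel | lra]]. }
  assert (HDz : forall t, 2 / d <= K t ->
            Derive z t = (Derive z t + K t * z t) / K t * K t - K t * z t).
  { intros t HKt; assert (0 < 2 / d) by (apply Rdiv_lt_0_compat; lra); field; lra. }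
  assert (Hup : at_top (fun t => z t - d <= 0)).
  { apply (eventually_nonpos_of_Derive _ 1); [intros t; auto_derive; apply Hz | lra |].
    generalize Hev; apply filter_imp; intros t [HKt Hr] Hpos.
    rewrite Derive_minus, Derive_const, HDz by (apply Hz || apply ex_derive_const || exact HKt).
    set (r := (Derive z t + K t * z t) / K t) in *.
    assert (2 <= K t * d) by nra; nra. }
  assert (Hlo : at_top (fun t => - d - z t <= 0)).
  { apply (eventually_nonpos_of_Derive _ 1); [intros t; auto_derive; apply Hz | lra |].
    generalize Hev; apply filter_imp; intros t [HKt Hr] Hpos.
    rewrite Derive_minus, Derive_const, HDz by (apply Hz || apply ex_derive_const || exact HKt).
    set (r := (Derive z t + K t * z t) / K t) in *.
    assert (2 <= K t * d) by nra; nra. }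
  generalize (filter_and _ _ Hup Hlo); apply filter_imp; intros t [Ht1 Ht2].
  apply Rabs_le; lra.
Qed.

Section QuadraticSystem.

Variables (F0 c1 a b : R) (W Q : R -> R) (t0 : R).
Hypothesis F0_pos : 0 < F0.
Hypothesis a_pos : 0 < a.
Hypothesis b_pos : 0 < b.
Hypothesis W_pos : forall t, 0 < W t.
Hypothesis W_deriv : forall t, is_derive W t (W t * Q t).
Hypothesis Q_deriv :
  forall t, is_derive Q t (F0 + c1 * Q t - a * Q t ^ 2 - b * W t * Q t).
Hypothesis Q_t0_nonneg : 0 <= Q t0.

Let ex_derive_W t : ex_derive W t := ex_intro _ _ (W_deriv t).
Let ex_derive_Q t : ex_derive Q t := ex_intro _ _ (Q_deriv t).
Let Derive_W t : Derive W t = W t * Q t := is_derive_unique _ _ _ (W_deriv t).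
Let Derive_Q t : Derive Q t = F0 + c1 * Q t - a * Q t ^ 2 - b * W t * Q t :=
  is_derive_unique _ _ _ (Q_deriv t).

Let c1_bounds : - Rabs c1 <= c1 <= Rabs c1.
Proof. now apply Rabs_le_between, Rle_refl. Qed.

Lemma Q_nonneg t : t0 <= t -> 0 <= Q t.
Proof.
  set (d := F0 / (Rabs c1 + a + F0 + 1)).
  pose proof (Rabs_pos c1).
  assert (Hd : 0 < d) by (apply Rdiv_lt_0_compat; lra).
  assert (Hdd : d * (Rabs c1 + a + F0 + 1) = F0) by (unfold d; field; lra).
  intros Ht; enough (- Q t <= 0) by lra; revert t Ht.
  apply (barrier_le (fun t => - Q t) t0 0 d); [intros t; auto_derive; auto | exact Hd | lra |].
  intros t _ Hband; rewrite Derive_opp, Derive_Q.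
  assert (d < 1) by nra.
  assert (0 < b * W t) by (apply Rmult_lt_0_compat; auto).
  assert (Q t ^ 2 <= d) by nra.
  nra.
Qed.

Lemma Q_bounded : exists M, forall t, t0 <= t -> Q t <= M.
Proof.
  set (M0 := (Rabs c1 + F0) / a + 1).
  assert (HM0 : a * M0 = Rabs c1 + F0 + a) by (unfold M0; field; lra).
  assert (1 <= M0) by (pose proof (Rabs_pos c1); nra).
  exists (Q t0 + M0).
  apply (barrier_le Q t0 _ 1 ex_derive_Q Rlt_0_1); [lra |].
  intros t Ht Hband; rewrite Derive_Q.
  assert (0 < b * W t) by (apply Rmult_lt_0_compat; auto).
  assert (a * M0 <= a * Q t) by (apply Rmult_le_compat_l; lra).
  nra.
Qed.

Lemma W_nondecreasing t1 t2 : t0 <= t1 -> t1 <= t2 -> W t1 <= W t2.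
Proof.
  intros Ht1 Ht12.
  enough (0 * (t2 - t1) <= W t2 - W t1) by lra.
  apply MVT_ge; [exact ex_derive_W | exact Ht12 |].
  intros t Ht; rewrite Derive_W.
  apply Rmult_le_pos; [apply Rlt_le, W_pos | apply Q_nonneg; lra].
Qed.

(* [Q + b W + C ln W - F0 t] is a Lyapunov function: it is nondecreasing
   once [0 <= Q <= M], which forces [b W + C ln W] to grow linearly. *)
Lemma W_to_infty : is_lim W p_infty p_infty.
Proof.
  destruct Q_bounded as [M HM].
  assert (HM0 : 0 <= M) by (specialize (HM t0 (Rle_refl _)); lra).
  set (C := Rabs c1 + a * M).
  assert (HC : 0 <= C) by (pose proof (Rabs_pos c1); unfold C; nra).
  set (Phi := fun t => Q t + b * W t + C * ln (W t) - F0 * t).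
  assert (HPhi' : forall t, is_derive Phi t (c1 * Q t - a * Q t ^ 2 + C * Q t)).
  { intros t; unfold Phi; pose proof (W_pos t).
    auto_derive; [repeat split; auto |].
    rewrite Derive_Q, Derive_W; field; lra. }
  assert (Phi_mono : forall t, t0 <= t -> Phi t0 <= Phi t).
  { intros t Ht; enough (0 * (t - t0) <= Phi t - Phi t0) by lra.
    apply MVT_ge; [intros s; eexists; apply HPhi' | exact Ht |].
    intros s Hs; rewrite (is_derive_unique _ _ _ (HPhi' s)).
    pose proof (Q_nonneg s ltac:(lra)); pose proof (HM s ltac:(lra)).
    assert (Q s ^ 2 <= M * Q s) by nra.
    assert (- Rabs c1 * Q s <= c1 * Q s) by (pose proof c1_bounds; nra).
    unfold C; nra. }
  apply is_lim_p_infty_p_infty_intro; intros M0.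
  set (M1 := Rmax M0 1).
  assert (HM1 : M0 <= M1 /\ 1 <= M1) by (split; [apply Rmax_l | apply Rmax_r]).
  set (t1 := Rmax t0 ((M + b * M1 + C * ln M1 - Phi t0) / F0 + 1)).
  assert (Ht1 : t0 <= t1 /\ (M + b * M1 + C * ln M1 - Phi t0) / F0 + 1 <= t1)
    by (split; [apply Rmax_l | apply Rmax_r]).
  assert (HW1 : M1 <= W t1).
  { apply Rnot_lt_le; intros HW1.
    assert (C * ln (W t1) <= C * ln M1)
      by (apply Rmult_le_compat_l, Rlt_le, ln_increasing; auto; lra).
    assert (F0 * ((M + b * M1 + C * ln M1 - Phi t0) / F0) = M + b * M1 + C * ln M1 - Phi t0)
      by (field; lra).
    pose proof (Phi_mono t1 (proj1 Ht1)); pose proof (HM t1 (proj1 Ht1)).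
    unfold Phi in *; nra. }
  apply (at_top_of_ge t1); intros t Ht.
  pose proof (W_nondecreasing t1 t (proj1 Ht1) Ht); lra.
Qed.

Lemma Q_to_0 : is_lim Q p_infty 0.
Proof.
  destruct Q_bounded as [M HM].
  assert (HM0 : 0 <= M) by (specialize (HM t0 (Rle_refl _)); lra).
  apply is_lim_p_infty_intro; intros eta Heta.
  set (Fm := F0 + Rabs c1 * M).
  assert (Hbig : at_top (fun t => t0 <= t /\ (Fm + 1) / (b * eta) <= W t)).
  { apply filter_and; [apply at_top_ge | apply is_lim_p_infty_p_infty_elim, W_to_infty]. }
  assert (Hle : at_top (fun t => Q t - eta <= 0)).
  { apply (eventually_nonpos_of_Derive _ 1); [intros t; auto_derive; auto | lra |].
    generalize Hbig; apply filter_imp; intros t [Ht HWt] Hpos.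
    rewrite Derive_minus, Derive_const, Derive_Q by (apply ex_derive_Q || apply ex_derive_const).
    assert (Fm + 1 <= b * eta * W t).
    { replace (Fm + 1) with (b * eta * ((Fm + 1) / (b * eta))) by (field; lra).
      apply Rmult_le_compat_l; [nra | exact HWt]. }
    assert (b * W t * eta <= b * W t * Q t)
      by (apply Rmult_le_compat_l; [pose proof (W_pos t); nra | lra]).
    assert (c1 * Q t <= Rabs c1 * M).
    { pose proof c1_bounds; pose proof (HM t Ht); pose proof (Q_nonneg t Ht); nra. }
    assert (0 <= a * Q t ^ 2) by (apply Rmult_le_pos; [lra | apply pow2_ge_0]).
    unfold Fm in *; nra. }
  generalize (filter_and _ _ Hle (at_top_ge t0)); apply filter_imp; intros t [Hlt Ht].
  pose proof (Q_nonneg t Ht); apply Rabs_le; lra.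
Qed.

Let G t := F0 + c1 * Q t - a * Q t ^ 2.

Lemma G_to_F0 : is_lim G p_infty F0.
Proof.
  pose proof Q_to_0 as HQ.
  assert (H : is_lim (fun t => F0 + c1 * Q t - a * (Q t * Q t)) p_infty
                (F0 + c1 * 0 - a * (0 * 0))).
  { apply is_lim_minus'; [apply is_lim_plus' |].
    - apply is_lim_const.
    - apply is_lim_mult_R; [apply is_lim_const | exact HQ].
    - apply is_lim_mult_R; [apply is_lim_const | now apply is_lim_mult_R]. }
  replace (F0 + c1 * 0 - a * (0 * 0)) with F0 in H by ring.
  revert H; apply is_lim_ext; intros t; unfold G; ring.
Qed.

Lemma bW_div_t_to_F0 : is_lim (fun t => b * W t / t) p_infty F0.
Proof.
  assert (HZ : is_lim (fun t => (Q t + b * W t) / t) p_infty F0).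
  { apply is_lim_div_id_of_Derive; [intros t; auto_derive; auto |].
    apply (is_lim_ext G); [intros t; symmetry | exact G_to_F0].
    apply is_derive_unique; auto_derive; [auto |].
    rewrite Derive_Q, Derive_W; unfold G; ring. }
  pose proof (is_lim_minus' _ _ _ _ _ HZ (is_lim_mult_R _ _ _ _ _ Q_to_0 is_lim_inv_id))
    as H.
  replace (F0 - 0 * 0) with F0 in H by ring.
  revert H; apply is_lim_ext_loc; apply (at_top_of_ge 1); intros t Ht.
  field; lra.
Qed.

Lemma bW_to_infty : is_lim (fun t => b * W t) p_infty p_infty.
Proof.
  apply is_lim_p_infty_p_infty_intro; intros M.
  generalize (is_lim_p_infty_p_infty_elim _ W_to_infty (M / b)); apply filter_imp.
  intros t Ht; replace M with (b * (M / b)) by (field; lra).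
  apply Rmult_le_compat_l; lra.
Qed.

(* [z = t Q - 1] satisfies [z' + b W z = Q + t G - b W], which is [o(b W)]
   because [b W ~ F0 t]. *)
Lemma tQ_to_1 : is_lim (fun t => t * Q t) p_infty 1.
Proof.
  set (z := fun t => t * Q t - 1).
  assert (Hz : forall t, is_derive z t (Q t + t * (G t - b * W t * Q t))).
  { intros t; unfold z; auto_derive; [auto |]; rewrite Derive_Q; unfold G; ring. }
  assert (Hlim : is_lim (fun t => Q t * / (b * W t) + (G t - b * W t / t) * / (b * W t / t))
                   p_infty (0 * 0 + (F0 - F0) * / F0)).
  { apply is_lim_plus'; apply is_lim_mult_R.
    - exact Q_to_0.
    - exact (is_lim_inv_p_infty _ bW_to_infty).
    - exact (is_lim_minus' _ _ _ _ _ G_to_F0 bW_div_t_to_F0).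
    - apply is_lim_inv_R; [lra | exact bW_div_t_to_F0]. }
  replace (0 * 0 + (F0 - F0) * / F0) with 0 in Hlim by (field; lra).
  enough (Hz0 : is_lim z p_infty 0).
  { pose proof (is_lim_plus' _ _ _ _ _ Hz0 (is_lim_const 1 p_infty)) as H.
    replace (0 + 1) with 1 in H by ring.
    revert H; apply is_lim_ext; intros t; unfold z; ring. }
  apply (is_lim_0_of_damped z (fun t => b * W t)).
  - intros t; eexists; apply Hz.
  - exact bW_to_infty.
  - revert Hlim; apply is_lim_ext_loc, (at_top_of_ge 1); intros t Ht.
    rewrite (is_derive_unique _ _ _ (Hz t)); unfold z.
    pose proof (W_pos t); field; lra.
Qed.

(* [P = Q'] satisfies [(t P)' + K (t P) = P - (b W / t) (t Q)^2], which stays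
   bounded while [K ~ b W -> +oo]. *)
Lemma t_Derive_Q_to_0 : is_lim (fun t => t * Derive Q t) p_infty 0.
Proof.
  set (P := fun t => G t - b * W t * Q t).
  set (K := fun t => b * W t + (2 * a * Q t - c1)).
  assert (HP' : forall t, is_derive P t (- (b * W t * Q t ^ 2) - K t * P t)).
  { intros t; unfold P, G, K; auto_derive; [repeat split; auto |].
    rewrite Derive_Q, Derive_W; ring. }
  assert (Hz : forall t, is_derive (fun t => t * P t) t
                           (P t + t * (- (b * W t * Q t ^ 2) - K t * P t))).
  { intros t; auto_derive; [eexists; apply HP' |].
    replace (Derive (fun x : R => P x) t) with (- (b * W t * Q t ^ 2) - K t * P t)
      by (symmetry; apply is_derive_unique, HP'); ring. }
  assert (HK : is_lim K p_infty p_infty).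
  { apply (is_lim_plus _ _ _ p_infty (2 * a * 0 - c1)); [exact bW_to_infty | | easy].
    apply is_lim_minus'; [| apply is_lim_const].
    apply is_lim_mult_R; [apply is_lim_const | exact Q_to_0]. }
  assert (HPlim : is_lim P p_infty (F0 - F0 * 1)).
  { apply (is_lim_ext_loc (fun t => G t - b * W t / t * (t * Q t))).
    - apply (at_top_of_ge 1); intros t Ht; unfold P; field; lra.
    - apply is_lim_minus'; [| apply is_lim_mult_R];
        [exact G_to_F0 | exact bW_div_t_to_F0 | exact tQ_to_1]. }
  assert (Hlim : is_lim (fun t => (P t - b * W t / t * ((t * Q t) * (t * Q t))) * / K t)
                   p_infty ((F0 - F0 * 1 - F0 * (1 * 1)) * 0)).
  { apply is_lim_mult_R; [apply is_lim_minus'; [exact HPlim |] | exact (is_lim_inv_p_infty _ HK)].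
    apply is_lim_mult_R; [exact bW_div_t_to_F0 | apply is_lim_mult_R; exact tQ_to_1]. }
  replace ((F0 - F0 * 1 - F0 * (1 * 1)) * 0) with 0 in Hlim by ring.
  apply (is_lim_ext (fun t => t * P t)); [intros t; now rewrite Derive_Q |].
  apply (is_lim_0_of_damped (fun t => t * P t) K).
  - intros t; eexists; apply Hz.
  - exact HK.
  - revert Hlim; apply is_lim_ext_loc.
    generalize (filter_and _ _ (at_top_ge 1) (is_lim_p_infty_p_infty_elim _ HK 1)).
    apply filter_imp; intros t [Ht HKt].
    rewrite (is_derive_unique (fun t : R => t * P t) t _ (Hz t)); field; lra.
Qed.

Lemma tWQ_expansion : is_lim (fun t => t * (W t * Q t - F0 / b)) p_infty (c1 / b).
Proof.
  assert (H : is_lim (fun t => / b * (c1 * (t * Q t) - a * ((t * Q t) * Q t)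
                                       - t * Derive Q t))
                p_infty (/ b * (c1 * 1 - a * (1 * 0) - 0))).
  { apply is_lim_mult_R; [apply is_lim_const |].
    apply is_lim_minus'; [apply is_lim_minus' | exact t_Derive_Q_to_0].
    - apply is_lim_mult_R; [apply is_lim_const | exact tQ_to_1].
    - apply is_lim_mult_R; [apply is_lim_const | apply is_lim_mult_R];
        [exact tQ_to_1 | exact Q_to_0]. }
  replace (/ b * (c1 * 1 - a * (1 * 0) - 0)) with (c1 / b) in H by (field; lra).
  revert H; apply is_lim_ext; intros t; rewrite Derive_Q; field; lra.
Qed.

End QuadraticSystem.

Lemma Derive_vpow (m : R) (v : R -> R) (r : R) :
  0 < v r -> ex_derive v r ->
  Derive (vpow v m) r = m * vpow v m r / v r * Derive v r.
Proof.
  intros Hv Hd; unfold vpow, Rpower; apply is_derive_unique.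
  auto_derive; [repeat split; auto |].
  change (Derive (fun x => v x) r) with (Derive v r); field; lra.
Qed.

(* With [r = e^s] and [q = 2 + (1 - m) / m * r u' / u], the left-hand side is
   [dq/ds]: the radial equation becomes a Riccati equation for [q]. *)
Lemma radial_eq_riccati (N m beta r U U1 U2 V V1 X : R) :
  1 < N -> 0 < m < 1 -> 0 < r -> 0 < U -> 0 < V ->
  U1 = m * U / V * V1 -> X * U = V ->
  (N - 1) / m * (U2 + (N - 1) / r * U1) + 2 * beta / (1 - m) * V + beta * r * V1 = 0 ->
  let q := 2 + (1 - m) / m * (r * U1 / U) in
  (1 - m) / m * (r * U1 / U + r ^ 2 * U2 / U - (r * U1 / U) ^ 2) =
  2 * (N - 2 - N * m) / (1 - m) + ((N + 2) * m - (N - 2)) / (1 - m) * q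
  - m / (1 - m) * q ^ 2 - beta / (N - 1) * (r ^ 2 * X) * q.
Proof.
  intros HN Hm Hr HU HV HU1 HX Hrad q.
  assert (HV1 : V1 = U1 * V / (m * U)) by (rewrite HU1; field; lra).
  assert (HX' : X = V / U) by (rewrite <- HX; field; lra).
  assert (HU2 : U2 = - ((N - 1) / r * U1)
                     - m / (N - 1) * (2 * beta / (1 - m) * V + beta * r * V1)).
  { apply (Rmult_eq_reg_l ((N - 1) / m)); [| apply Rgt_not_eq, Rdiv_lt_0_compat; lra].
    rewrite Rmult_minus_distr_l.
    replace ((N - 1) / m * U2) with (- (2 * beta / (1 - m) * V + beta * r * V1)
                                      - (N - 1) / m * ((N - 1) / r * U1)) by lra.
    field; lra. }
  unfold q; rewrite HU2, HX', HV1; field; repeat split; lra.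
Qed.

(* [qfun m v] is the logarithmic derivative [w_s / w] of [wfun m v], written
   through [u = v^m] by means of [r v' / v = r u' / (m u)]. *)
Definition qfun (m : R) (v : R -> R) (t : R) : R :=
  2 + (1 - m) / m * (exp t * Derive (vpow v m) (exp t) / vpow v m (exp t)).

Lemma wfun_pos (m : R) (v : R -> R) (s : R) : 0 < wfun m v s.
Proof. apply Rmult_lt_0_compat; apply exp_pos. Qed.

Section RadialSolution.

Variables (N m beta lambda : R) (v : R -> R).
Hypothesis N_gt_1 : 1 < N.
Hypothesis m_pos : 0 < m.
Hypothesis m_lt_1 : m < 1.
Hypothesis v_sol : is_radial_solution N m beta lambda v.
Hypothesis m_subcritical : N * m < N - 2.
Hypothesis beta_pos : 0 < beta.
Hypothesis lambda_pos : 0 < lambda.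

Let v_pos t : 0 < v (exp t).
Proof. apply (proj1 v_sol); left; apply exp_pos. Qed.

Let u_pos t : 0 < vpow v m (exp t).
Proof. apply exp_pos. Qed.

Lemma is_derive_wfun t : is_derive (wfun m v) t (wfun m v t * qfun m v t).
Proof.
  destruct v_sol as (_ & _ & _ & _ & Hdv & _).
  pose proof (v_pos t); pose proof (u_pos t).
  pose proof (Hdv (exp t) (exp_pos t)).
  unfold wfun, qfun; rewrite Derive_vpow by auto.
  unfold Rpower at 1; auto_derive; [repeat split; auto |].
  change (Derive (fun x => v x) (exp t)) with (Derive v (exp t)).
  unfold Rpower; field; repeat split; lra.
Qed.

Lemma is_derive_qfun t :
  is_derive (qfun m v) t
    (2 * (N - 2 - N * m) / (1 - m) + ((N + 2) * m - (N - 2)) / (1 - m) * qfun m v t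
     - m / (1 - m) * qfun m v t ^ 2 - beta / (N - 1) * wfun m v t * qfun m v t).
Proof.
  destruct v_sol as (_ & _ & _ & _ & Hdv & Hdu & Hddu & Hrad).
  pose proof (v_pos t); pose proof (u_pos t); pose proof (exp_pos t).
  pose proof (Hdv (exp t) (exp_pos t)).
  assert (HX : Rpower (v (exp t)) (1 - m) * vpow v m (exp t) = v (exp t)).
  { unfold vpow; rewrite <- Rpower_plus, Rplus_comm, Rplus_minus, Rpower_1; auto. }
  pose proof (radial_eq_riccati N m beta (exp t) (vpow v m (exp t))
    (Derive (vpow v m) (exp t)) (Derive (Derive (vpow v m)) (exp t))
    (v (exp t)) (Derive v (exp t)) (Rpower (v (exp t)) (1 - m))
    N_gt_1 (conj m_pos m_lt_1) (exp_pos t) (u_pos t) (v_pos t)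
    (Derive_vpow m v (exp t) (v_pos t) (Hdv (exp t) (exp_pos t))) HX
    (Hrad (exp t) (exp_pos t))) as Hriccati; cbv zeta in Hriccati.
  unfold qfun, wfun; auto_derive; [repeat split; auto; lra |].
  change (Derive (fun x => Derive (vpow v m) x) (exp t))
    with (Derive (Derive (vpow v m)) (exp t)).
  change (Derive (fun x => vpow v m x) (exp t)) with (Derive (vpow v m) (exp t)).
  replace (exp (2 * t)) with (exp t ^ 2)
    by (replace (2 * t) with (t + t) by ring; rewrite exp_plus; ring).
  rewrite <- Hriccati; field; lra.
Qed.

Lemma qfun_nonneg_somewhere : exists t0, 0 <= qfun m v t0.
Proof.
  destruct v_sol as (_ & _ & Hv0 & Hu0 & _).
  set (c := Rpower (lambda / 2) m); set (k := 2 * m / (1 - m)).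
  assert (Hc : 0 < c) by apply exp_pos.
  assert (Hk : 0 < k) by (apply Rdiv_lt_0_compat; lra).
  assert (Hnear : at_right 0 (fun r => (0 < r /\ lambda / 2 < v r) /\
                    (Rabs (Derive (vpow v m) r) < 1 /\ r < k * c))).
  { repeat apply filter_and.
    - exists (mkposreal 1 Rlt_0_1); intros r _ Hr; exact Hr.
    - apply (filter_imp (fun r => Rabs (v r - lambda) < lambda / 2)).
      + intros r Hr; apply Rabs_def2 in Hr; lra.
      + exact (proj1 (filterlim_locally v lambda) Hv0 (mkposreal (lambda / 2) ltac:(lra))).
    - apply (filter_imp (fun r => Rabs (Derive (vpow v m) r - 0) < 1)).
      + intros r Hr; now rewrite Rminus_0_r in Hr.
      + exact (proj1 (filterlim_locally _ 0) Hu0 (mkposreal 1 Rlt_0_1)).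
    - assert (Hkc : 0 < k * c) by now apply Rmult_lt_0_compat.
      exists (mkposreal (k * c) Hkc); intros r Hr _.
      change (Rabs (r - 0) < k * c) in Hr; apply Rabs_def2 in Hr; lra. }
  destruct (Hierarchy.filter_ex _ Hnear) as [r0 [[Hr0 Hv] [Hu' Hrk]]].
  exists (ln r0); unfold qfun; rewrite exp_ln by exact Hr0.
  assert (Hu : c <= vpow v m r0) by (apply Rle_Rpower_l; lra).
  assert (Hratio : - k < r0 * Derive (vpow v m) r0 / vpow v m r0).
  { apply Rabs_def2 in Hu'.
    apply Rlt_div_r; [lra |]; nra. }
  assert (Hk2 : (1 - m) / m * k = 2) by (unfold k; field; lra).
  assert (0 < (1 - m) / m) by (apply Rdiv_lt_0_compat; lra).
  nra.
Qed.

Lemma is_derive_hfun s :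
  is_derive (hfun N m beta v) s
    (wfun m v s * qfun m v s - 2 * (N - 1) * (N - 2 - N * m) / ((1 - m) * beta)).
Proof.
  apply (is_derive_minus _ (fun s => _ * s)); [apply is_derive_wfun |].
  auto_derive; [exact I | ring].
Qed.

Lemma s_Derive_hfun_limit :
  is_lim (fun s => s * Derive (hfun N m beta v) s) p_infty
    (- ((N - 1) * (N - 2 - (N + 2) * m)) / ((1 - m) * beta)).
Proof.
  destruct qfun_nonneg_somewhere as [t0 Ht0].
  pose proof (tWQ_expansion (2 * (N - 2 - N * m) / (1 - m))
    (((N + 2) * m - (N - 2)) / (1 - m)) (m / (1 - m)) (beta / (N - 1))
    (wfun m v) (qfun m v) t0
    ltac:(apply Rdiv_lt_0_compat; lra) ltac:(apply Rdiv_lt_0_compat; lra)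
    ltac:(apply Rdiv_lt_0_compat; lra) (wfun_pos m v)
    is_derive_wfun is_derive_qfun Ht0) as Hlim.
  replace (((N + 2) * m - (N - 2)) / (1 - m) / (beta / (N - 1)))
    with (- ((N - 1) * (N - 2 - (N + 2) * m)) / ((1 - m) * beta)) in Hlim
    by (field; repeat split; lra).
  revert Hlim; apply is_lim_ext; intros s.
  rewrite (is_derive_unique _ _ _ (is_derive_hfun s)); field; repeat split; lra.
Qed.

End RadialSolution.

Theorem lemma2p3 (n : nat) (m beta lambda : R) (v : R -> R) :
  (3 <= n)%nat ->
  0 < m -> m < (INR n - 2) / INR n ->
  m <> (INR n - 2) / (INR n + 2) ->
  0 < beta -> 0 < lambda ->
  is_radial_solution (INR n) m beta lambda v ->
  let L := - ((INR n - 1) * (INR n - 2 - (INR n + 2) * m)) / ((1 - m) * beta) in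
  is_lim (fun s => hfun (INR n) m beta v s / ln s) p_infty L /\
  is_lim (fun s => s * Derive (hfun (INR n) m beta v) s) p_infty L.
Proof.
  (* The excluded value [m = (n-2)/(n+2)] is the case [L = 0]; it needs no special treatment. *)
  intros Hn Hm Hmn _ Hbeta Hlambda Hsol L.
  assert (HN : 3 <= INR n) by (apply le_INR in Hn; simpl in Hn; lra).
  set (N := INR n) in *.
  assert (HNm : N * m < N - 2).
  { apply (Rmult_lt_compat_l N) in Hmn; [| lra].
    replace (N * ((N - 2) / N)) with (N - 2) in Hmn by (field; lra); lra. }
  assert (Hm1 : m < 1) by nra.
  pose proof (s_Derive_hfun_limit N m beta lambda v ltac:(lra) Hm Hm1 Hsol HNm Hbeta Hlambda)
    as Hslope.
  split; [| exact Hslope].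
  apply is_lim_div_ln_of_Derive; [| exact Hslope].
  intros s; eexists; apply (is_derive_hfun N m beta lambda v Hm Hsol).
Qed.
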